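(* Let $S$ be a $0$-left cancellative semigroup admitting least common multiples. Then: (i) the set of open ultracharacters of $\mathfrak E(S)$ equals $\{\varphi_\sigma:\sigma \text{ is an open, quasi-maximal string in } S\}$; (ii) the set of ultracharacters of $\mathfrak E(S)$ that are not open equals $\{\hat\theta_u(\varphi): u\in\tilde S,\ \varphi \text{ a ground ultracharacter with } \varphi\in\hat F_u\}$.
   Context: $S$ has zero $0$, $S'=S\setminus\{0\}$; $0$-left cancellative: $st=sr\ne0\Rightarrow t=r$. $\tilde S=S\cup\{1\}$ ($1$ an adjoined identity); $s\mid t$ iff $t\in s\tilde S$; $r$ is a least common multiple of $s,t$ if $sS\cap tS=rS$, $s\mid r$, $t\mid r$; every pair has one. For $s\in S$: $F_s=\{x\in S':sx\ne0\}$, $E_s=sS\setminus\{0\}$, $\theta_s:F_s\to E_s$, $x\mapsto sx$. $\mathcal H(S)$ is the inverse semigroup of partial bijections of $S'$ generated by the $\theta_s$; $\mathfrak E(S)=\{X\subseteq S':\mathrm{id}_X\in\mathcal H(S)\}$ (a semilattice under $\cap$ containing all $E_s,F_s$). A character of $\mathfrak E(S)$ is a nonzero map $\varphi:\mathfrak E(S)\to\{0,1\}$ with $\varphi(\emptyset)=0$, $\varphi(X\cap Y)=\varphi(X)\varphi(Y)$; an ultracharacter is a character $\varphi$ such that $\varphi\le\psi$ pointwise for a character $\psi$ forces $\varphi=\psi$. A string is a nonempty $\sigma\subseteq S$ with $0\notin\sigma$, closed under divisors, any two elements having a common multiple in $\sigma$; it is open if $\sigma=\{s\in S:\exists p\in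 S,\ sp\in\sigma\}$. For a string $\sigma$, $\varphi_\sigma(X)=1$ iff for every $s\in\sigma$ there is $t\in\sigma\cap X$ with $s\mid t$ (else $0$); $\sigma$ is quasi-maximal if $\varphi_\sigma$ is an ultracharacter. For a character $\varphi$ let $\sigma_\varphi=\{s\in S:\varphi(E_s)=1\}$; $\varphi$ is open if $\sigma_\varphi$ is a nonempty open string, and $\varphi$ is a ground character if $\sigma_\varphi=\emptyset$. Dual representation: for $s\in S$, $\hat F_s=\{\varphi:\varphi(F_s)=1\}$ and for $\varphi\in\hat F_s$, $\hat\theta_s(\varphi)(X)=\varphi(\{y\in S':sy\in X\})$ for $X\in\mathfrak E(S)$; $\hat F_1$ is the set of all characters and $\hat\theta_1$ is the identity. *)

From Stdlib Require Import Classical.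

Record zsemigroup := ZSemigroup {
  car :> Type;
  mul : car -> car -> car;
  zero : car;
  mulA : forall x y w, mul x (mul y w) = mul (mul x y) w;
  mul0l : forall x, mul zero x = zero;
  mul0r : forall x, mul x zero = zero
}.

Section Defs.
Variable S : zsemigroup.
Local Notation "x * y" := (mul S x y).
Local Notation "0" := (zero S).

Definition zero_left_cancellative : Prop :=
  forall s t r : S, s * t = s * r -> s * t <> 0 -> t = r.

(* s | t  iff  t \in s (S \cup {1}) *)
Definition divides (s t : S) : Prop := t = s \/ exists u, t = s * u.

Definition is_lcm (s t r : S) : Prop :=
  (forall x : S, ((exists a, x = s * a) /\ (exists b, x = t * b))
                 <-> (exists c, x = r * c))
  /\ divides s r /\ divides t r.

Definition admits_lcm : Prop := forall s t : S, exists r, is_lcm s t r.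

Definition Fset (s : S) : S -> Prop := fun x => x <> 0 /\ s * x <> 0.
Definition Eset (s : S) : S -> Prop := fun x => x <> 0 /\ exists y, x = s * y.
Definition theta (s : S) : S -> S -> Prop := fun x y => Fset s x /\ y = s * x.

(* H(S): the inverse semigroup of partial bijections of S' generated by the
   theta_s (partial bijections represented by their graphs). *)
Inductive inH : (S -> S -> Prop) -> Prop :=
| H_gen : forall s, inH (theta s)
| H_inv : forall R, inH R -> inH (fun x y => R y x)
| H_comp : forall R Q, inH R -> inH Q ->
    inH (fun x y => exists w, Q x w /\ R w y).

Definition inE (X : S -> Prop) : Prop :=
  (forall x, X x -> x <> 0) /\
  exists R, inH R /\ forall x y, R x y <-> (x = y /\ X x).

(* Characters are represented Prop-valued: phi X  means  phi(X) = 1. *)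
Definition character (phi : (S -> Prop) -> Prop) : Prop :=
  (exists X, inE X /\ phi X) /\
  ~ phi (fun _ => False) /\
  (forall X Y, inE X -> inE Y ->
     (phi (fun x => X x /\ Y x) <-> (phi X /\ phi Y))).

Definition char_eq (phi psi : (S -> Prop) -> Prop) : Prop :=
  forall X, inE X -> (phi X <-> psi X).

Definition ultracharacter (phi : (S -> Prop) -> Prop) : Prop :=
  character phi /\
  forall psi, character psi -> (forall X, inE X -> phi X -> psi X) ->
    char_eq phi psi.

Definition is_string (sigma : S -> Prop) : Prop :=
  (exists s, sigma s) /\ ~ sigma 0 /\
  (forall s t, sigma t -> divides s t -> sigma s) /\
  (forall s t, sigma s -> sigma t ->
     exists r, sigma r /\ divides s r /\ divides t r).

Definition open_string (sigma : S -> Prop) : Prop :=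
  forall s, sigma s <-> exists p, sigma (s * p).

Definition phi_of (sigma : S -> Prop) : (S -> Prop) -> Prop :=
  fun X => forall s, sigma s -> exists t, sigma t /\ X t /\ divides s t.

Definition quasi_maximal (sigma : S -> Prop) : Prop :=
  ultracharacter (phi_of sigma).

Definition sigma_of (phi : (S -> Prop) -> Prop) : S -> Prop :=
  fun s => phi (Eset s).

Definition open_char (phi : (S -> Prop) -> Prop) : Prop :=
  (exists s, sigma_of phi s) /\ is_string (sigma_of phi) /\
  open_string (sigma_of phi).

Definition ground_char (phi : (S -> Prop) -> Prop) : Prop :=
  forall s, ~ sigma_of phi s.

(* tilde S = S + {1}, encoded as option S with None = 1 *)
Definition hatF (u : option S) (phi : (S -> Prop) -> Prop) : Prop :=
  match u with
  | None => character phi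
  | Some s => character phi /\ phi (Fset s)
  end.

Definition hattheta (u : option S) (phi : (S -> Prop) -> Prop)
  : (S -> Prop) -> Prop :=
  match u with
  | None => phi
  | Some s => fun X => phi (fun y => y <> 0 /\ X (s * y))
  end.

End Defs.

From Stdlib Require Import Classical FunctionalExtensionality PropExtensionality List.
Import ListNotations.

(* Every partial bijection in H(S) has the normal form [v z |-> u z] with
   v, u in S~, where z ranges over the elements of S not annihilated by a fixed
   finite set of elements of S~: least common multiples and 0-left cancellation
   keep this form closed under composition.  Hence every X in E(S) is convex for
   divisibility, and meets E_(v z) only if z is annihilated by none of them.  From this, a
   character phi whose string sigma_phi is open lies below phi_(sigma_phi), and
   phi_sigma is a character for every open string sigma; so an open
   ultracharacter is phi_(sigma_phi), which gives (i).  If phi is not open, either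
   sigma_phi is empty (phi is ground) or some s in sigma_phi has no proper
   multiple s p in sigma_phi.  Then psi X := phi (s X) is ground with
   psi(F_s) = 1 and phi = hat-theta_s psi, because composing with theta_s and
   with its inverse are mutually inverse monotone maps between the characters
   with phi(E_s) = 1 and those with psi(F_s) = 1, so they preserve maximality. *)

Lemma pred_ext {T : Type} (X Y : T -> Prop) : (forall x, X x <-> Y x) -> X = Y.
Proof.
  intro H; apply functional_extensionality; intro x.
  apply propositional_extensionality, H.
Qed.

Section Ultracharacters.
Context {S : zsemigroup}.
Hypothesis cancel : zero_left_cancellative S.
Hypothesis lcm : admits_lcm S.
Local Notation "x * y" := (mul S x y).
Local Notation "0" := (zero S).

(* [None] plays the role of the adjoined identity of S~ = S + {1}. *)
Definition lact (a : option S) (z : S) : S :=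
  match a with None => z | Some a => a * z end.
Definition ract (z : S) (q : option S) : S :=
  match q with None => z | Some q => z * q end.
Definition omul (a b : option S) : option S :=
  match a, b with
  | None, _ => b
  | _, None => a
  | Some a, Some b => Some (a * b)
  end.

Lemma lact_omul a b z : lact (omul a b) z = lact a (lact b z).
Proof. destruct a, b; simpl; auto. symmetry; apply mulA. Qed.

Lemma lact_ract a z q : lact a (ract z q) = ract (lact a z) q.
Proof. destruct a, q; simpl; auto. apply mulA. Qed.

Lemma ract0 q : ract 0 q = 0.
Proof. destruct q; simpl; auto. apply mul0l. Qed.

Lemma lact_mul a z y : lact a (z * y) = lact a z * y.
Proof. destruct a; simpl; auto. apply mulA. Qed.

Lemma ract_mul p a c : ract p a * c = p * lact a c.
Proof. destruct a; simpl; auto. symmetry; apply mulA. Qed.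

Lemma lact_inj a x y : lact a x = lact a y -> lact a x <> 0 -> x = y.
Proof. destruct a; simpl; auto. apply cancel. Qed.

Lemma dividesP s t : divides S s t <-> exists q, t = ract s q.
Proof.
  split.
  - intros [H | [u H]]; [exists None | exists (Some u)]; auto.
  - intros [[q |] H]; [right; eauto | left; auto].
Qed.

Lemma divides_refl s : divides S s s.
Proof. left; auto. Qed.

Lemma divides_trans a b c : divides S a b -> divides S b c -> divides S a c.
Proof.
  rewrite !dividesP; intros [p ->] [q ->].
  exists (omul p q); destruct p, q; simpl; auto. symmetry; apply mulA.
Qed.

Lemma divides_mulr s r q : divides S s r -> divides S s (r * q).
Proof. intro H; apply (divides_trans s r); auto. right; eauto. Qed.

(** * Normal forms of the partial bijections in H(S) *)

Definition survives (W : list (option S)) (z : S) : Prop :=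
  forall w, In w W -> lact w z <> 0.

Lemma survives_incl A B z : incl A B -> survives B z -> survives A z.
Proof. unfold survives; auto. Qed.

Lemma survives_cons w W z : In w W -> (survives (w :: W) z <-> survives W z).
Proof.
  intro Hw; split; apply survives_incl; intros w' Hw'; simpl in *; auto.
  destruct Hw' as [<- | Hw']; auto.
Qed.

Lemma survives_app A B z : survives (A ++ B) z <-> survives A z /\ survives B z.
Proof.
  split.
  - intro H; split; (eapply survives_incl; [| exact H]);
      auto using incl_appl, incl_appr, incl_refl.
  - intros [HA HB] w Hw; apply in_app_or in Hw as [Hw | Hw]; auto.
Qed.

Lemma survives_map W a c :
  survives (map (fun w => omul w a) W) c <-> survives W (lact a c).
Proof.
  split.
  - intros H w Hw; rewrite <- lact_omul; apply H, in_map_iff; eauto.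
  - intros H w Hw; apply in_map_iff in Hw as [w' [<- Hw']]; rewrite lact_omul; auto.
Qed.

Definition normal_form (v u : option S) (W : list (option S)) (x y : S) : Prop :=
  exists z, survives (v :: u :: W) z /\ x = lact v z /\ y = lact u z.

Definition has_normal_form (R : S -> S -> Prop) : Prop :=
  exists v u W, forall x y, R x y <-> normal_form v u W x y.

Lemma theta_normal_form s : has_normal_form (theta S s).
Proof.
  exists None, (Some s), []; intros x y; split.
  - intros [[Hx Hsx] ->]; exists x; repeat split; auto.
    intros w [<- | [<- | []]]; assumption.
  - intros [z [Hz [-> ->]]]; repeat split.
    + apply (Hz None); simpl; auto.
    + apply (Hz (Some s)); simpl; auto.
Qed.

Lemma inv_normal_form R : has_normal_form R -> has_normal_form (fun x y => R y x).
Proof.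
  intros [v [u [W HR]]]; exists u, v, W; intros x y; rewrite HR.
  split; intros [z [Hz [-> ->]]]; exists z; repeat split;
    (eapply survives_incl; [| exact Hz]); intros w; simpl; tauto.
Qed.

Lemma lcm_factor (u v : option S) : exists a b,
  (forall c, lact u (lact a c) = lact v (lact b c)) /\
  (forall z1 z2, lact u z1 = lact v z2 -> lact u z1 <> 0 ->
     exists c, z1 = lact a c /\ z2 = lact b c).
Proof.
  destruct u as [p |]; [destruct v as [q |] |].
  - destruct (lcm p q) as [r [Hr [Hpr Hqr]]].
    apply dividesP in Hpr as [a Ha]; apply dividesP in Hqr as [b Hb].
    exists a, b; split.
    + intro c; simpl; rewrite <- !ract_mul, <- Ha, <- Hb; reflexivity.
    + simpl; intros z1 z2 Hz Hnz.
      destruct (proj1 (Hr (p * z1))) as [c Hc]; [split; eauto |].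
      exists c; split.
      * apply (cancel p); auto. rewrite Hc, Ha, ract_mul; reflexivity.
      * apply (cancel q); rewrite <- Hz; auto. rewrite Hc, Hb, ract_mul; reflexivity.
  - exists None, (Some p); split; [reflexivity |].
    intros z1 z2 Hz _; exists z1; simpl in *; auto.
  - exists v, None; split; [reflexivity |].
    intros z1 z2 Hz _; exists z2; simpl in *; auto.
Qed.

(* Least common multiples let the middle of [x -> w -> y] be written
   [u1 (a c) = v2 (b c)], so the composite is again in normal form. *)
Lemma comp_normal_form R Q : has_normal_form R -> has_normal_form Q ->
  has_normal_form (fun x y => exists w, Q x w /\ R w y).
Proof.
  intros [v2 [u2 [W2 HR]]] [v1 [u1 [W1 HQ]]].
  destruct (lcm_factor u1 v2) as [a [b [Hab Hfac]]].
  set (V1 := v1 :: u1 :: W1); set (V2 := v2 :: u2 :: W2).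
  set (W := map (fun w => omul w a) V1 ++ map (fun w => omul w b) V2).
  assert (HW : forall c, survives (omul v1 a :: omul u2 b :: W) c <->
                         survives V1 (lact a c) /\ survives V2 (lact b c)).
  { intro c; unfold W; rewrite !survives_cons, survives_app, !survives_map;
      [tauto | |]; simpl; rewrite ?in_app_iff; simpl; tauto. }
  exists (omul v1 a), (omul u2 b), W; intros x y; split.
  - intros [w [Hq Hr]].
    apply HQ in Hq as [z1 [H1 [-> Hw]]]; apply HR in Hr as [z2 [H2 [Hw' ->]]].
    destruct (Hfac z1 z2) as [c [-> ->]]; [congruence | apply H1; simpl; auto |].
    exists c; rewrite HW, !lact_omul; auto.
  - intros [c [Hc [-> ->]]]; apply HW in Hc as [H1 H2].
    exists (lact u1 (lact a c)); split; [apply HQ | apply HR].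
    + exists (lact a c); rewrite lact_omul; auto.
    + exists (lact b c); rewrite lact_omul, Hab; auto.
Qed.

Lemma inH_normal_form R : inH S R -> has_normal_form R.
Proof.
  induction 1.
  - apply theta_normal_form.
  - apply inv_normal_form; auto.
  - apply comp_normal_form; auto.
Qed.

Lemma inE_normal_form X : inE S X ->
  exists v W, forall x, X x <-> exists z, survives W z /\ x = lact v z.
Proof.
  intros [_ [R [HR HRX]]]; destruct (inH_normal_form R HR) as [v [u [W HN]]].
  exists v, (v :: u :: W); intro x; split.
  - intro Hx; destruct (proj1 (HN x x) (proj2 (HRX x x) (conj eq_refl Hx)))
      as [z [Hz [Hxz _]]]; eauto.
  - intros [z [Hz ->]].
    assert (H : R (lact v z) (lact u z)) by (apply HN; exists z; auto).
    apply HRX in H; tauto.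
Qed.

Lemma inE_nz X x : inE S X -> X x -> x <> 0.
Proof. intros [H _]; auto. Qed.

Lemma inE_convex X a b c :
  inE S X -> X a -> X c -> divides S a b -> divides S b c -> X b.
Proof.
  intros HX Ha Hc Hab Hbc; assert (Hc0 := inE_nz X c HX Hc).
  destruct (inE_normal_form X HX) as [v [W HW]].
  apply HW in Ha as [za [Hza ->]]; apply HW in Hc as [zc [Hzc ->]].
  apply dividesP in Hab as [q1 ->]; apply dividesP in Hbc as [q2 Hq].
  rewrite <- !lact_ract in Hq; apply lact_inj in Hq; auto.
  apply HW; exists (ract za q1); split; [| symmetry; apply lact_ract].
  intros w Hw Hw0; apply (Hzc w Hw).
  rewrite Hq, lact_ract, Hw0; apply ract0.
Qed.

Definition pre (s : S) (X : S -> Prop) : S -> Prop :=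
  fun y => y <> 0 /\ X (s * y).
Definition img (s : S) (X : S -> Prop) : S -> Prop :=
  fun x => exists y, X y /\ Fset S s y /\ x = s * y.

Lemma inE_empty : inE S (fun _ => False).
Proof.
  split; [tauto |]; exists (theta S 0); split; [apply H_gen |].
  intros x y; split; [| tauto]; intros [[_ H] _]; rewrite mul0l in H; tauto.
Qed.

Lemma inE_inter X Y : inE S X -> inE S Y -> inE S (fun x => X x /\ Y x).
Proof.
  intros [HX [RX [IX EX]]] [HY [RY [IY EY]]]; split; [intros x [H _]; auto |].
  exists (fun x y => exists w, RY x w /\ RX w y); split; [apply H_comp; auto |].
  intros x y; split.
  - intros [w [H1 H2]]; apply EY in H1 as [-> ?]; apply EX in H2 as [-> ?]; auto.
  - intros [-> [? ?]]; exists y; split; [apply EY | apply EX]; auto.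
Qed.

Lemma inE_Eset s : inE S (Eset S s).
Proof.
  split; [intros x [H _]; auto |].
  exists (fun x y => exists w, theta S s w x /\ theta S s w y).
  split; [apply H_comp; [apply H_gen | apply H_inv, H_gen] |].
  unfold theta, Fset, Eset; intros x y; split.
  - intros [w [[[H1 H2] ->] [_ ->]]]; eauto.
  - intros [-> [Hx [w ->]]]; exists w.
    assert (w <> 0) by (intros ->; apply Hx, mul0r); tauto.
Qed.

Lemma inE_Fset s : inE S (Fset S s).
Proof.
  split; [intros x [H _]; auto |].
  exists (fun x y => exists w, theta S s x w /\ theta S s y w).
  split; [apply H_comp; [apply H_inv, H_gen | apply H_gen] |].
  unfold theta; intros x y; split.
  - intros [w [[Fx ->] [Fy Hw]]]; split; auto.
    symmetry; apply (cancel s); auto; apply Fy.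
  - intros [<- Fx]; exists (s * x); tauto.
Qed.

Lemma inE_pre s X : inE S X -> inE S (pre s X).
Proof.
  intros [HX [R [IR ER]]]; split; [intros x [H _]; auto |].
  exists (fun x y => exists w, theta S s x w /\
            exists w', R w w' /\ theta S s y w').
  split; [apply H_comp; [apply H_comp; [apply H_inv, H_gen | auto] | apply H_gen] |].
  unfold theta, pre, Fset; intros x y; split.
  - intros [w [[Fx ->] [w' [Hr [Fy Hy]]]]]; apply ER in Hr as [<- Hx].
    assert (x = y) by (apply (cancel s); auto; tauto); subst; tauto.
  - intros [-> [Hy HXy]]; assert (Hsy := HX _ HXy).
    exists (s * y); split; [tauto |].
    exists (s * y); split; [apply ER |]; tauto.
Qed.

Lemma inE_img s X : inE S X -> inE S (img s X).
Proof.
  intros [HX [R [IR ER]]]; split; [intros x [y [_ [[_ H] ->]]]; auto |].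
  exists (fun x y => exists w, (exists w', theta S s w' x /\ R w' w) /\ theta S s w y).
  split; [apply H_comp; [apply H_gen | apply H_comp; [auto | apply H_inv, H_gen]] |].
  unfold theta, img; intros x y; split.
  - intros [w [[w' [[Fw' ->] Hr]] [Fw ->]]]; apply ER in Hr as [<- Hw]; eauto.
  - intros [-> [w [Hw [Fw ->]]]]; exists w; split; [exists w; split |]; auto.
    apply ER; auto.
Qed.

Lemma img_pre s X x : img s (pre s X) x <-> X x /\ Eset S s x.
Proof.
  unfold img, pre, Eset, Fset; split.
  - intros [y [[Hy HXy] [[_ Hsy] ->]]]; eauto.
  - intros [Hx [Hx0 [y ->]]]; exists y.
    assert (y <> 0) by (intros ->; apply Hx0, mul0r); tauto.
Qed.

Lemma pre_img s X y : pre s (img s X) y <-> X y /\ Fset S s y.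
Proof.
  unfold img, pre, Fset; split.
  - intros [Hy [y' [HX [[H1 H2] E]]]].
    assert (y = y') by (apply (cancel s); congruence); subst; tauto.
  - intros [HX [H1 H2]]; split; auto; exists y; tauto.
Qed.

Lemma img_inter s X Y x :
  img s (fun x => X x /\ Y x) x <-> img s X x /\ img s Y x.
Proof.
  unfold img, Fset; split.
  - intros [y [[A B] [C ->]]]; split; eauto.
  - intros [[y [A [C ->]]] [y' [B [D E]]]].
    assert (y = y') by (apply (cancel s); tauto); subst; eauto.
Qed.

Lemma img_empty s x : ~ img s (fun _ => False) x.
Proof. intros [y [[] _]]. Qed.

Lemma pre_empty s y : ~ pre s (fun _ => False) y.
Proof. intros [_ []]. Qed.

Lemma pre_inter s X Y y :
  pre s (fun x => X x /\ Y x) y <-> pre s X y /\ pre s Y y.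
Proof. unfold pre; tauto. Qed.

Lemma img_Fset s x : img s (Fset S s) x <-> Eset S s x.
Proof.
  unfold img, Fset, Eset; split.
  - intros [y [A [_ ->]]]; split; [tauto | eauto].
  - intros [Hx0 [y ->]]; exists y.
    assert (y <> 0) by (intros ->; apply Hx0, mul0r); tauto.
Qed.

Lemma pre_Eset s y : pre s (Eset S s) y <-> Fset S s y.
Proof. unfold pre, Eset, Fset; split; [tauto |]; intros [A B]; eauto. Qed.

Lemma img_Eset s t x : img s (Eset S t) x <-> Eset S (s * t) x.
Proof.
  unfold img, Eset, Fset; split.
  - intros [y [[_ [z ->]] [[_ Hn] ->]]]; split; auto; exists z; apply mulA.
  - intros [Hx0 [z ->]]; exists (t * z); rewrite mulA.
    assert (t * z <> 0) by (intro H; apply Hx0; rewrite <- mulA, H; apply mul0r).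
    repeat split; eauto.
Qed.

Lemma pre_Eset_mul s p y : pre s (Eset S (s * p)) y -> Eset S p y.
Proof.
  intros [Hy [Hn [z Hz]]]; split; auto; exists z.
  rewrite <- mulA in Hz; apply (cancel s); auto.
Qed.

Lemma char_ext (phi : (S -> Prop) -> Prop) X Y :
  (forall x, X x <-> Y x) -> phi X -> phi Y.
Proof. intro H; rewrite (pred_ext X Y H); auto. Qed.

Lemma char_empty phi X : character S phi -> (forall x, ~ X x) -> ~ phi X.
Proof.
  intros [_ [H _]] HX Hp; apply H; revert Hp; apply char_ext.
  intro x; split; [apply HX | intros []].
Qed.

Lemma char_restrict phi A X Y : character S phi -> inE S A -> inE S X -> phi A ->
  (forall x, Y x <-> X x /\ A x) -> (phi Y <-> phi X).
Proof.
  intros [_ [_ Hm]] HA HX HpA HY; rewrite (pred_ext Y _ HY), Hm; tauto.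
Qed.

Lemma char_mono phi X Y : character S phi -> inE S X -> inE S Y ->
  (forall x, X x -> Y x) -> phi X -> phi Y.
Proof.
  intros [_ [_ Hm]] HX HY Hs Hp.
  apply (Hm X Y); auto; revert Hp; apply char_ext; intro x; split; [auto | tauto].
Qed.

Lemma char_disjoint phi X Y : character S phi -> inE S X -> inE S Y ->
  (forall x, X x -> Y x -> False) -> phi X -> phi Y -> False.
Proof.
  intros Hphi HX HY Hd H1 H2.
  apply (char_empty phi (fun x => X x /\ Y x)); [auto | intros x [? ?]; eauto |].
  apply Hphi; auto.
Qed.

Lemma char_eq_sym phi psi : char_eq S phi psi -> char_eq S psi phi.
Proof. intros H X HX; symmetry; auto. Qed.

Lemma ultracharacter_char_eq phi psi :
  char_eq S phi psi -> ultracharacter S phi -> ultracharacter S psi.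
Proof.
  intros He [[[X [HX HpX]] [H0 Hm]] Hu]; split; [split; [| split] |].
  - exists X; split; auto; apply He; auto.
  - intro H; apply H0, He; auto; apply inE_empty.
  - intros A B HA HB.
    rewrite <- (He _ (inE_inter A B HA HB)), <- (He A HA), <- (He B HB); auto.
  - intros chi Hchi Hle A HA.
    assert (Hc : char_eq S phi chi).
    { apply Hu; auto; intros B HB HpB; apply Hle, He; auto. }
    rewrite <- (He A HA), (Hc A HA); tauto.
Qed.

Lemma char_comp (f : (S -> Prop) -> S -> Prop) phi Z :
  (forall X, inE S X -> inE S (f X)) ->
  (forall x, ~ f (fun _ => False) x) ->
  (forall X Y x, f (fun y => X y /\ Y y) x <-> f X x /\ f Y x) ->
  character S phi -> inE S Z -> phi (f Z) -> character S (fun X => phi (f X)).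
Proof.
  intros Hf Hf0 Hfi Hphi HZ HfZ; split; [| split].
  - exists Z; auto.
  - apply (char_empty phi); auto.
  - intros X Y HX HY; rewrite <- (proj2 (proj2 Hphi)) by auto.
    split; apply char_ext; intro x; rewrite Hfi; tauto.
Qed.

Lemma string_nz sigma t : is_string S sigma -> sigma t -> t <> 0.
Proof. intros [_ [H0 _]] Ht E; subst; auto. Qed.

Lemma open_string_above sigma s p : is_string S sigma -> open_string S sigma ->
  sigma s -> sigma p -> exists z, sigma (p * z) /\ divides S s (p * z).
Proof.
  intros [_ [_ [_ Hcm]]] Ho Hs Hp.
  destruct (Hcm s p Hs Hp) as [r [Hr [Hsr Hpr]]].
  destruct (proj1 (Ho r) Hr) as [q Hq].
  apply dividesP in Hpr as [a ->].
  exists (lact a q); rewrite <- ract_mul; auto using divides_mulr.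
Qed.

Lemma string_not_open sigma : is_string S sigma -> ~ open_string S sigma ->
  exists s, sigma s /\ ~ exists p, sigma (s * p).
Proof.
  intros [_ [_ [Hd _]]] Hno; apply NNPP; intro Hn; apply Hno; intro s; split.
  - intro H; apply NNPP; intro H'; apply Hn; eauto.
  - intros [p Hp]; apply (Hd _ (s * p)); auto; right; eauto.
Qed.

Lemma phi_of_Eset sigma s : is_string S sigma -> open_string S sigma ->
  (phi_of S sigma (Eset S s) <-> sigma s).
Proof.
  intros Hs Ho; split.
  - intro H; destruct Hs as [[t Ht] [_ [Hd _]]].
    destruct (H t Ht) as [r [Hr [[_ [y ->]] _]]].
    apply (Hd _ (s * y)); auto; right; eauto.
  - intros Hss t Ht; destruct (open_string_above sigma t s) as [z [Hz Hdz]]; auto.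
    exists (s * z); repeat split; eauto using string_nz.
Qed.

Lemma phi_of_eventually sigma X : is_string S sigma -> inE S X ->
  phi_of S sigma X -> exists t0, sigma t0 /\ forall t, sigma t -> divides S t0 t -> X t.
Proof.
  intros [[s0 Hs0] _] HX Hp.
  destruct (Hp s0 Hs0) as [t0 [Ht0 [Xt0 _]]]; exists t0; split; auto.
  intros t Ht Hdt; destruct (Hp t Ht) as [t' [_ [Xt' Htt']]].
  apply (inE_convex X t0 t t'); auto.
Qed.

Lemma phi_of_character sigma : is_string S sigma -> open_string S sigma ->
  character S (phi_of S sigma).
Proof.
  intros Hs Ho; pose proof Hs as [[s0 Hs0] [_ [_ Hcm]]]; split; [| split].
  - exists (Eset S s0); split; [apply inE_Eset | apply phi_of_Eset; auto].
  - intro H; destruct (H s0 Hs0) as [t [_ [[] _]]].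
  - intros X Y HX HY; split.
    + intro H; split; intros s Hss; destruct (H s Hss) as [t [? [[? ?] ?]]]; eauto.
    + intros [HpX HpY].
      destruct (phi_of_eventually sigma X) as [t0 [Ht0 E0]]; auto.
      destruct (phi_of_eventually sigma Y) as [t1 [Ht1 E1]]; auto.
      destruct (Hcm t0 t1) as [r [Hr [H0r H1r]]]; auto.
      intros s Hss; destruct (Hcm s r) as [r' [Hr' [Hsr' Hrr']]]; auto.
      exists r'; repeat split; eauto using divides_trans.
Qed.

Lemma sigma_of_string phi : character S phi -> (exists s, sigma_of S phi s) ->
  is_string S (sigma_of S phi).
Proof.
  intros Hphi Hne; unfold sigma_of; split; [auto | split; [| split]].
  - apply (char_empty phi); auto; intros x [Hx [y Hy]]; rewrite mul0l in Hy; auto.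
  - intros s t Ht [-> | [u ->]]; auto.
    apply (char_mono phi (Eset S (s * u))); auto using inE_Eset.
    intros x [Hx [y ->]]; split; auto; exists (u * y); symmetry; apply mulA.
  - intros s t Hs Ht; destruct (lcm s t) as [r [Hr [Hsr Htr]]].
    exists r; repeat split; auto.
    apply (char_ext phi (fun x => Eset S s x /\ Eset S t x));
      [| apply Hphi; auto using inE_Eset].
    intro x; unfold Eset; rewrite <- Hr; tauto.
Qed.

Lemma killed_Eset_disjoint X v W z :
  (forall x, X x <-> exists z, survives W z /\ x = lact v z) -> ~ survives W z ->
  forall x, X x -> Eset S (lact v z) x -> False.
Proof.
  intros HW Hk x Hx [Hx0 [y Hy]]; apply HW in Hx as [z' [Hz' ->]].
  rewrite <- lact_mul in Hy; apply lact_inj in Hy; auto.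
  apply Hk; intros w Hw Hwz; apply (Hz' w Hw).
  rewrite Hy, lact_mul, Hwz; apply mul0l.
Qed.

Lemma char_le_phi_of_sigma phi X : character S phi ->
  is_string S (sigma_of S phi) -> open_string S (sigma_of S phi) ->
  inE S X -> phi X -> phi_of S (sigma_of S phi) X.
Proof.
  intros Hphi Hs Ho HX HpX s Hss.
  destruct (inE_normal_form X HX) as [v [W HW]].
  assert (Hz : exists z, sigma_of S phi (lact v z) /\ divides S s (lact v z)).
  { destruct v as [p |]; [| exists s; split; auto using divides_refl].
    apply (open_string_above _ s p); auto.
    apply (char_mono phi X); auto using inE_Eset.
    intros x Hx; split; [exact (inE_nz X x HX Hx) |].
    apply HW in Hx as [z [_ ->]]; exists z; reflexivity. }
  destruct Hz as [z [Hsz Hdz]]; exists (lact v z); repeat split; auto.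
  apply HW; exists z; split; auto.
  apply NNPP; intro Hk.
  apply (char_disjoint phi X (Eset S (lact v z))); auto using inE_Eset.
  apply killed_Eset_disjoint with W; auto.
Qed.

(** * Transport of ultracharacters *)

Section Transport.
Variables (f g : (S -> Prop) -> S -> Prop) (A B : S -> Prop).
Hypotheses (inE_A : inE S A) (inE_B : inE S B).
Hypotheses (inE_f : forall X, inE S X -> inE S (f X))
           (inE_g : forall X, inE S X -> inE S (g X)).
Hypotheses (f_empty : forall x, ~ f (fun _ => False) x)
           (g_empty : forall x, ~ g (fun _ => False) x).
Hypotheses (f_inter : forall X Y x, f (fun y => X y /\ Y y) x <-> f X x /\ f Y x)
           (g_inter : forall X Y x, g (fun y => X y /\ Y y) x <-> g X x /\ g Y x).
Hypotheses (f_B : forall x, f B x <-> A x) (g_A : forall x, g A x <-> B x).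
Hypotheses (f_g : forall X, inE S X -> forall x, f (g X) x <-> X x /\ A x)
           (g_f : forall X, inE S X -> forall x, g (f X) x <-> X x /\ B x).

(* [chi |-> chi o g] inverts [phi |-> phi o f] on characters with
   [phi A = 1], resp. [chi B = 1], and both maps are monotone. *)
Lemma ultracharacter_comp phi : ultracharacter S phi -> phi A ->
  ultracharacter S (fun X => phi (f X)).
Proof.
  intros [Hphi Hmax] HA.
  assert (HfB : phi (f B)) by (revert HA; apply char_ext; intro; symmetry; apply f_B).
  split; [apply (char_comp f phi B); auto |].
  intros chi Hchi Hle.
  assert (HB : chi B) by (apply Hle; auto).
  assert (Hchig : character S (fun X => chi (g X))).
  { apply (char_comp g chi A); auto.
    revert HB; apply char_ext; intro; symmetry; apply g_A. }
  assert (Heq : char_eq S phi (fun X => chi (g X))).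
  { apply Hmax; auto; intros X HX HpX; apply Hle; auto.
    apply (char_restrict phi A X); auto. }
  intros X HX; split; [apply Hle; auto |]; intro HchiX.
  apply (Heq (f X)); auto.
  apply (char_restrict chi B X); auto.
Qed.
End Transport.

Lemma ultracharacter_img s phi : ultracharacter S phi -> phi (Eset S s) ->
  ultracharacter S (fun X => phi (img s X)).
Proof.
  apply ultracharacter_comp with (g := pre s) (B := Fset S s);
    auto using inE_Eset, inE_Fset, inE_pre, inE_img, img_inter, img_Fset, pre_Eset,
      img_empty, pre_empty, pre_inter, img_pre, pre_img.
Qed.

Lemma ultracharacter_pre s psi : ultracharacter S psi -> psi (Fset S s) ->
  ultracharacter S (fun X => psi (pre s X)).
Proof.
  apply ultracharacter_comp with (g := img s) (B := Eset S s);
    auto using inE_Eset, inE_Fset, inE_pre, inE_img, img_inter, img_Fset, pre_Eset,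
      img_empty, pre_empty, pre_inter, img_pre, pre_img.
Qed.

(** * Open and non-open ultracharacters *)

Lemma open_ultracharacter_iff phi :
  ultracharacter S phi /\ open_char S phi <->
  exists sigma, is_string S sigma /\ open_string S sigma /\
    quasi_maximal S sigma /\ char_eq S phi (phi_of S sigma).
Proof.
  split.
  - intros [[Hphi Hmax] [_ [Hs Ho]]]; exists (sigma_of S phi).
    assert (Heq : char_eq S phi (phi_of S (sigma_of S phi))).
    { apply Hmax; auto using phi_of_character, char_le_phi_of_sigma. }
    refine (conj Hs (conj Ho (conj _ Heq))).
    apply (ultracharacter_char_eq phi); auto; split; auto.
  - intros [sigma [Hs [Ho [Hq He]]]].
    assert (Hsig : forall s, sigma_of S phi s <-> sigma s).
    { intro s; rewrite <- (phi_of_Eset sigma s) by auto; apply He, inE_Eset. }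
    split; [apply (ultracharacter_char_eq (phi_of S sigma)); auto using char_eq_sym |].
    unfold open_char; rewrite (pred_ext _ _ Hsig).
    split; [apply Hs | split; auto].
Qed.

Lemma nonopen_ultracharacter_theta phi :
  ultracharacter S phi -> ~ open_char S phi ->
  exists u psi, ground_char S psi /\ ultracharacter S psi /\ hatF S u psi /\
    char_eq S phi (hattheta S u psi).
Proof.
  intros Hu Hno; pose proof Hu as [Hphi _].
  destruct (classic (exists s, sigma_of S phi s)) as [Hne | Hnone].
  2: { exists None, phi; refine (conj _ (conj Hu (conj Hphi _))).
       - intros s Hs; eauto.
       - intros X _; reflexivity. }
  destruct (string_not_open (sigma_of S phi)) as [s [Hs Hmax]];
    auto using sigma_of_string.
  { intro Ho; apply Hno; split; [| split]; auto using sigma_of_string. }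
  pose proof (ultracharacter_img s phi Hu Hs) as Hpsi.
  exists (Some s), (fun X => phi (img s X));
    refine (conj _ (conj Hpsi (conj (conj (proj1 Hpsi) _) _))).
  - intros t Ht; apply Hmax; exists t; revert Ht; apply char_ext, img_Eset.
  - revert Hs; apply char_ext; intro; rewrite img_Fset; tauto.
  - intros X HX; change (phi X <-> phi (img s (pre s X))).
    symmetry; apply (char_restrict phi (Eset S s) X); auto using inE_Eset, img_pre.
Qed.

Lemma theta_ground_ultracharacter phi u psi :
  ground_char S psi -> ultracharacter S psi -> hatF S u psi ->
  char_eq S phi (hattheta S u psi) -> ultracharacter S phi /\ ~ open_char S phi.
Proof.
  intros Hg Hu HF He; destruct u as [s |].
  2: { split; [apply (ultracharacter_char_eq psi); auto using char_eq_sym |].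
       intros [[t Ht] _]; apply (Hg t), He; auto using inE_Eset. }
  destruct HF as [Hpsi HFs]; split.
  { apply (ultracharacter_char_eq _ phi (char_eq_sym _ _ He)).
    apply ultracharacter_pre; auto. }
  intros [_ [_ Ho]].
  assert (Hs : sigma_of S phi s).
  { apply He; [apply inE_Eset |]; change (psi (pre s (Eset S s))).
    revert HFs; apply char_ext; intro; rewrite pre_Eset; tauto. }
  destruct (proj1 (Ho s) Hs) as [p Hp].
  apply He in Hp; [| apply inE_Eset].
  apply (Hg p), (char_mono psi (pre s (Eset S (s * p))));
    auto using inE_pre, inE_Eset; apply pre_Eset_mul.
Qed.
End Ultracharacters.

Theorem theorem17p11 (S : zsemigroup)
  (Hcanc : zero_left_cancellative S) (Hlcm : admits_lcm S) :
  (forall phi : (S -> Prop) -> Prop,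
     (ultracharacter S phi /\ open_char S phi) <->
     exists sigma : S -> Prop,
       is_string S sigma /\ open_string S sigma /\ quasi_maximal S sigma /\
       char_eq S phi (phi_of S sigma))
  /\
  (forall phi : (S -> Prop) -> Prop,
     (ultracharacter S phi /\ ~ open_char S phi) <->
     exists (u : option S) (psi : (S -> Prop) -> Prop),
       ground_char S psi /\ ultracharacter S psi /\ hatF S u psi /\
       char_eq S phi (hattheta S u psi)).
Proof.
  split; intro phi.
  - apply (open_ultracharacter_iff Hcanc Hlcm).
  - split.
    + intros [Hu Hno]; apply (nonopen_ultracharacter_theta Hcanc Hlcm); auto.
    + intros [u [psi [Hg [Hu [HF He]]]]].
      apply (theta_ground_ultracharacter Hcanc phi u psi); auto.
Qed.
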